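(* Let $V$ be a finite nonempty set and $f:\{0,1\}^V\to\{0,1\}^V$. If $f$ is even or odd, then for every $x\in\{0,1\}^V$ every vertex of the local interaction graph $Gf(x)$ has odd out-degree; in particular $Gf(x)$ has a cycle.
   Context: $\oplus$ is componentwise addition mod 2; $\|x\|$ is the number of $1$s of $x$, and $x$ is even (odd) if $\|x\|$ is even (odd). The conjugate is $\tilde f(x)=f(x)\oplus x$; $f$ is even (odd) if $\tilde f(\{0,1\}^V)$ is exactly the set of even (odd) points of $\{0,1\}^V$. For $x^{j\alpha}$ the point equal to $x$ except its $j$-component is $\alpha$, $Gf(x)$ is the signed digraph on $V$ with a positive arc from $j$ to $i$ if $f_i(x^{j1})-f_i(x^{j0})=1$ and a negative arc if it equals $-1$ (loops allowed; out-degree counts loops). A cycle is a subgraph whose underlying unsigned digraph is a directed cycle. *)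

From mathcomp Require Import all_boot all_order all_algebra.
Set Implicit Arguments. Unset Strict Implicit. Unset Printing Implicit Defensive.

Definition point (V : finType) := {ffun V -> bool}.

Definition weight (V : finType) (x : point V) : nat := #|[set i | x i]|.

Definition upd (V : finType) (x : point V) (j : V) (a : bool) : point V :=
  [ffun k => if k == j then a else x k].

Definition conjf (V : finType) (f : point V -> point V) (x : point V) : point V :=
  [ffun i => xorb (f x i) (x i)].

Definition even_map (V : finType) (f : point V -> point V) : Prop :=
  forall y : point V, (exists x, conjf f x = y) <-> ~~ odd (weight y).
Definition odd_map (V : finType) (f : point V -> point V) : Prop :=
  forall y : point V, (exists x, conjf f x = y) <-> odd (weight y).

(* Signed label of the arc j -> i in Gf(x):  f_i(x^{j1}) - f_i(x^{j0}) in {-1,0,1};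
   0 means no arc, 1 a positive arc, -1 a negative arc. *)
Definition Gsign (V : finType) (f : point V -> point V) (x : point V) (j i : V) : int :=
  ((f (upd x j true) i : nat)%:Z - (f (upd x j false) i : nat)%:Z)%R.

Definition Garc (V : finType) (f : point V -> point V) (x : point V) : rel V :=
  fun j i => Gsign f x j i != 0%R.

Definition outdeg (V : finType) (f : point V -> point V) (x : point V) (j : V) : nat :=
  #|[set i | Garc f x j i]|.

Definition has_cycle (V : finType) (f : point V -> point V) (x : point V) : Prop :=
  exists c : seq V, [/\ c != [::], uniq c & cycle (Garc f x) c].

From mathcomp Require Import all_boot all_order all_algebra.

(* Write a := x^{j0} and b := x^{j1}.  The out-neighbours of j in Gf(x) are the
   coordinates where f(a) and f(b) differ, so the out-degree of j has the parity
   of ||f(a)|| + ||f(b)||.  As f~(y) = f(y) (+) y, this is the parity of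
   ||f~(a)|| + ||f~(b)|| + ||a|| + ||b||; the first two terms have equal parity
   because f is even or odd, and a, b differ in exactly one coordinate, so the
   out-degree is odd.  In particular every vertex has an out-neighbour, and
   following a choice of out-neighbours in the finite set V closes a cycle. *)

Section Orbits.

Variable T : finType.

Lemma exists_fcycle_orbit (s : T -> T) (x0 : T) : exists x, fcycle s (orbit s x).
Proof.
case: (@arg_minnP _ x0 predT (order s) isT) => x _ min_x; exists x.
(* Off a cycle, [order] strictly decreases along [s]. *)
case: orderPcycle => // _ ordx.
by have := min_x (s x) isT; rewrite ordx ltnn.
Qed.

Lemma serial_rel_has_cycle (e : rel T) (x0 : T) :
  (forall x, exists y, e x y) -> exists c, [/\ c != [::], uniq c & cycle e c].
Proof.
move=> serial_e; pose s x := xchoose (serial_e x).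
have [x cycle_x] := exists_fcycle_orbit s x0.
exists (orbit s x); split=> //.
- by apply/eqP => orbit0; have := in_orbit s x; rewrite orbit0.
- by apply: sub_cycle cycle_x => a b /eqP <-; exact: xchooseP.
Qed.

End Orbits.

Section Parity.

Variable V : finType.
Implicit Types (u w x : point V) (f : point V -> point V).

Definition xorp u w : point V := [ffun i => u i (+) w i].

Lemma odd_weight u : odd (weight u) = \big[addb/false]_i u i.
Proof.
rewrite /weight -sum1_card (big_morph odd oddD (erefl : odd 0 = false)).
by rewrite big_mkcond; apply: eq_bigr => i _; rewrite inE; case: (u i).
Qed.

Lemma odd_weight_xorp u w :
  odd (weight (xorp u w)) = odd (weight u) (+) odd (weight w).
Proof. by rewrite !odd_weight -big_split; apply: eq_bigr => i _; rewrite ffunE. Qed.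

Lemma conjfE f x : conjf f x = xorp (f x) x.
Proof. by apply/ffunP => i; rewrite !ffunE; case: (f x i); case: (x i). Qed.

Lemma weight_xorp_upd x j : weight (xorp (upd x j true) (upd x j false)) = 1.
Proof.
rewrite /weight -(cards1 j); apply: eq_card => i.
by rewrite !inE !ffunE; case: (i == j); case: (x i).
Qed.

Lemma outdeg_weight f x j :
  outdeg f x j = weight (xorp (f (upd x j true)) (f (upd x j false))).
Proof.
apply: eq_card => i; rewrite !inE ffunE /Garc /Gsign.
by case: (f (upd x j true) i); case: (f (upd x j false) i).
Qed.

Lemma conjf_weight_parity f :
  even_map f \/ odd_map f -> exists b, forall x, odd (weight (conjf f x)) = b.
Proof.
case=> [even_f | odd_f]; [exists false | exists true] => x.
- by apply/negbTE; apply/(even_f _).1; exists x.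
- by apply/(odd_f _).1; exists x.
Qed.

Lemma odd_outdeg f x j : even_map f \/ odd_map f -> odd (outdeg f x j).
Proof.
case/conjf_weight_parity=> b parity_f.
move: (parity_f (upd x j true)) (parity_f (upd x j false)) => {parity_f}.
have := congr1 odd (weight_xorp_upd x j).
rewrite outdeg_weight !conjfE !odd_weight_xorp /=.
by case: b; do 4 case: (odd _).
Qed.

End Parity.

Theorem proposition4 (V : finType) (v0 : V) (f : point V -> point V) :
  (even_map f \/ odd_map f) ->
  forall x : point V, (forall j : V, odd (outdeg f x j)) /\ has_cycle f x.
Proof.
move=> Hf x; have odd_out j : odd (outdeg f x j) by exact: odd_outdeg.
split=> //; apply: serial_rel_has_cycle v0 _ => j.
have /card_gt0P[i] : 0 < outdeg f x j by case: outdeg (odd_out j).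
by rewrite inE; exists i.
Qed.
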